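(* Let $\mathcal{A}$ be a poset such that $\hat{a}=\{b\in\mathcal{A}: b\le a\}$ is finite for every $a\in\mathcal{A}$, and let $(G,F)$ be a functor from $\mathcal{A}$ to $\mathbf{Split}$ (over $\Lambda$-modules, $\Lambda$ a commutative ring). Then $(G,F)$ satisfies the intersection property if and only if $(G,F)$ is decomposable.
   Context: $\Lambda$ is a commutative ring and $\mathbf{Mod}$ the category of $\Lambda$-modules. A functor from a poset $\mathcal{A}$ to $\mathbf{Split}$ is a pair $(G,F)$ where $G:\mathcal{A}\to\mathbf{Mod}$ is a functor (maps $G^b_a:G(b)\to G(a)$ for $b\le a$), $F:\mathcal{A}^{op}\to\mathbf{Mod}$ is a presheaf (maps $F^a_b:F(a)\to F(b)$ for $b\le a$), $G(a)=F(a)$ for all $a$, and $F^a_bG^b_a=\mathrm{id}_{G(b)}$ for all $b\le a$. A morphism $(G,F)\to(G',F')$ is a pair $(\phi,\psi)$ with $\phi:G\to G'$ and $\psi:F'\to F$ natural transformations and $\psi_a\phi_a=\mathrm{id}$ for all $a$; it is an isomorphism if each $\phi_a$ is bijective with $\psi_a=\phi_a^{-1}$. A functor from $\mathcal{A}$ to $\mathbf{Split}(\mathrm{core}\,\mathbf{Mod})$ is such a pair $(G,F)$ in which every $G^b_a$ is an isomorphism (so $F^a_b=(G^b_a)^{-1}$). Intersection property: for $\alpha\in\mathcal{A}$ and $a\le\alpha$ put $\pi^\alpha_a=G^a_\alpha F^\alpha_a$, an idempotent endomorphism of $G(\alpha)$. Let $(s^\alpha_a)_{a\le\alpha}$ be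 the unique family of endomorphisms of $G(\alpha)$ with $\pi^\alpha_a=\sum_{b\le a}s^\alpha_b$ for all $a\le\alpha$ (Möbius inversion on the finite poset $\hat\alpha$). $(G,F)$ satisfies the intersection property if for all $\alpha\in\mathcal{A}$ and all $a,b\le\alpha$: $\pi^\alpha_a\pi^\alpha_b=\sum_{c\le a,\ c\le b}s^\alpha_c$ (when $\mathcal{A}$ is a meet semilattice this reads $\pi^\alpha_a\pi^\alpha_b=\pi^\alpha_{a\wedge b}$). Decomposable: there is a family $((G_c,F_c))_{c\in\mathcal{A}}$ of functors from $\mathcal{A}$ to $\mathbf{Split}(\mathrm{core}\,\mathbf{Mod})$ such that $(G,F)$ is isomorphic to $(S,T)$ where $S(a)=T(a)=\bigoplus_{c\le a}G_c(a)$, for $b\le a$ the map $S^b_a$ sends $(v_c)_{c\le b}$ to $(w_c)_{c\le a}$ with $w_c=(G_c)^b_a(v_c)$ if $c\le b$ and $w_c=0$ otherwise, and $T^a_b$ sends $(w_c)_{c\le a}$ to $((F_c)^a_b(w_c))_{c\le b}$. *)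

From HB Require Import structures.
From mathcomp Require Import all_boot all_order all_algebra.
Set Implicit Arguments. Unset Strict Implicit. Unset Printing Implicit Defensive.
Import Order.TTheory GRing.Theory.
Local Open Scope ring_scope.
Local Open Scope order_scope.

Section DSum.
Variables (R : comPzRingType) (I : finType) (M : I -> lmodType R).
Definition dsum := {dffun forall i : I, M i}.
HB.instance Definition _ := Choice.on dsum.
Definition dsum_zero : dsum := [ffun i => 0%R].
Definition dsum_add (f g : dsum) : dsum := [ffun i => (f i + g i)%R].
Definition dsum_opp (f : dsum) : dsum := [ffun i => (- f i)%R].
Definition dsum_scale (k : R) (f : dsum) : dsum := [ffun i => k *: f i].
Fact dsum_addA : associative dsum_add.
Proof. by move=> f g h; apply/ffunP=> i; rewrite !ffunE addrA. Qed.
Fact dsum_addC : commutative dsum_add.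
Proof. by move=> f g; apply/ffunP=> i; rewrite !ffunE addrC. Qed.
Fact dsum_add0 : left_id dsum_zero dsum_add.
Proof. by move=> f; apply/ffunP=> i; rewrite !ffunE add0r. Qed.
Fact dsum_addN : left_inverse dsum_zero dsum_opp dsum_add.
Proof. by move=> f; apply/ffunP=> i; rewrite !ffunE addNr. Qed.
HB.instance Definition _ :=
  GRing.isZmodule.Build dsum dsum_addA dsum_addC dsum_add0 dsum_addN.
Fact dsum_scaleA a b v : dsum_scale a (dsum_scale b v) = dsum_scale (a * b) v.
Proof. by apply/ffunP=> i; rewrite !ffunE scalerA. Qed.
Fact dsum_scale1 : left_id 1 dsum_scale.
Proof. by move=> f; apply/ffunP=> i; rewrite !ffunE scale1r. Qed.
Fact dsum_scaleDr : right_distributive dsum_scale +%R.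
Proof. by move=> a f g; apply/ffunP=> i; rewrite !ffunE scalerDr. Qed.
Fact dsum_scaleDl v : {morph dsum_scale^~ v : a b / a + b}.
Proof. by move=> a b; apply/ffunP=> i; rewrite !ffunE scalerDl. Qed.
HB.instance Definition _ :=
  GRing.Zmodule_isLmodule.Build R dsum dsum_scaleA dsum_scale1 dsum_scaleDr
    dsum_scaleDl.
End DSum.

Section Split.
Variables (R : comPzRingType) (d : Order.disp_t) (A : porderType d).

(* Data of a pair (G,F): common objects G(a) = F(a), maps
   sf_G b a = G^b_a : G(b) -> G(a) and sf_F a b = F^a_b : F(a) -> F(b).
   Only the values for b <= a are meaningful (constrained by is_split). *)
Record split_functor := SplitFunctor {
  sf_obj : A -> lmodType R;
  sf_G : forall b a : A, sf_obj b -> sf_obj a;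
  sf_F : forall a b : A, sf_obj a -> sf_obj b }.
End Split.
Arguments SplitFunctor {R d A} sf_obj sf_G sf_F.
Arguments sf_obj {R d A} s a.
Arguments sf_G {R d A} s b a _.
Arguments sf_F {R d A} s a b _.

Section Split2.
Variables (R : comPzRingType) (d : Order.disp_t) (A : porderType d).
Local Notation split_functor := (split_functor R A).

Definition is_split (X : split_functor) : Prop :=
  [/\ forall b a, b <= a -> linear (sf_G X b a),
      forall b a, b <= a -> linear (sf_F X a b),
      (forall a x, sf_G X a a x = x) /\
      (forall c b a, c <= b -> b <= a -> forall x,
          sf_G X c a x = sf_G X b a (sf_G X c b x)),
      (forall a x, sf_F X a a x = x) /\
      (forall a b c, c <= b -> b <= a -> forall x,
          sf_F X a c x = sf_F X b c (sf_F X a b x))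
    & forall b a, b <= a -> forall x, sf_F X a b (sf_G X b a x) = x].

Definition is_core_split (X : split_functor) : Prop :=
  is_split X /\ forall b a, b <= a -> bijective (sf_G X b a).

Definition split_iso (X Y : split_functor) : Prop :=
  exists (phi : forall a, sf_obj X a -> sf_obj Y a)
         (psi : forall a, sf_obj Y a -> sf_obj X a),
  [/\ forall a, linear (phi a),
      forall a, linear (psi a),
      forall b a, b <= a -> forall x, phi a (sf_G X b a x) = sf_G Y b a (phi b x),
      forall b a, b <= a -> forall y, psi b (sf_F Y a b y) = sf_F X a b (psi a y)
    & forall a, cancel (phi a) (psi a) /\ cancel (psi a) (phi a)].

(* Intersection property; hat a enumerates {b | b <= a}                *)
Variable hat : A -> seq A.

Definition sf_pi (X : split_functor) (al a : A) (x : sf_obj X al) : sf_obj X al :=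
  sf_G X a al (sf_F X al a x).

(* For every alpha and the (unique) family (s_a)_{a <= alpha} of
   endomorphisms of G(alpha) with pi_a = sum_{b <= a} s_b, we have
   pi_a pi_b = sum_{c <= a, c <= b} s_c. *)
Definition intersection_property (X : split_functor) : Prop :=
  forall (al : A) (s : A -> sf_obj X al -> sf_obj X al),
    (forall b, b <= al -> linear (s b)) ->
    (forall a, a <= al -> forall x,
        @sf_pi X al a x = (\sum_(b <- hat al | (b <= a)%O) s b x)%R) ->
    forall a b, a <= al -> b <= al -> forall x,
      @sf_pi X al a (@sf_pi X al b x) =
        (\sum_(c <- hat al | (c <= a)%O && (c <= b)%O) s c x)%R.

Definition S_obj (fam : A -> split_functor) (a : A) : lmodType R :=
  dsum (fun c : seq_sub (hat a) => sf_obj (fam (ssval c)) a).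

(* the component v_x of v in S(a) (taken to be 0 if x \notin hat a) *)
Definition dget (fam : A -> split_functor) (a : A) (v : S_obj fam a) (x : A)
  : sf_obj (fam x) a :=
  (if x \in hat a as bb return ((x \in hat a) = bb -> sf_obj (fam x) a)
   then fun H => v (@SeqSub _ (hat a) x H) else fun _ => 0%R) (erefl (x \in hat a)).
Arguments dget : clear implicits.

Definition S_map (fam : A -> split_functor) (b a : A) (v : S_obj fam b)
  : S_obj fam a :=
  [ffun c : seq_sub (hat a) =>
     if ssval c <= b then sf_G (fam (ssval c)) b a (dget fam b v (ssval c)) else 0%R].

Definition T_map (fam : A -> split_functor) (a b : A) (w : S_obj fam a)
  : S_obj fam b :=
  [ffun c : seq_sub (hat b) => sf_F (fam (ssval c)) a b (dget fam a w (ssval c))].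

Arguments S_map : clear implicits.
Arguments T_map : clear implicits.

Definition ST_functor (fam : A -> split_functor) : split_functor :=
  SplitFunctor (S_obj fam) (S_map fam) (T_map fam).

Definition decomposable (X : split_functor) : Prop :=
  exists fam : A -> split_functor,
    (forall c, is_core_split (fam c)) /\ split_iso X (ST_functor fam).

End Split2.

(* For alpha in A the idempotents pi_a = G^a_alpha F^alpha_a (a <= alpha)
   determine, by Moebius inversion over the finite down-set of alpha, the
   endomorphisms s^alpha_a with pi_a = sum_{b <= a} s^alpha_b.

   Decomposable => intersection property: in the model (S,T) the idempotent
   pi_a is the coordinate projection onto the summands c <= a and s_c is the
   projection onto the c-th summand; the property is transported along the
   isomorphism by uniqueness of Moebius inversion.

   Intersection property => decomposable: the property makes the s^alpha_c a
   complete family of orthogonal idempotents with pi_a s_b = [b <= a] s_b.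
   Taking G_c the constant functor on the image (fixed points) of s^c_c, the
   maps x |-> (s^c_c F^a_c x)_{c <= a} and (v_c)_c |-> sum_c G^c_a v_c are
   mutually inverse natural isomorphisms (G,F) ~ (S,T). *)

From HB Require Import structures.
From mathcomp Require Import all_boot all_order all_algebra.
Import Order.TTheory GRing.Theory.
Set Implicit Arguments. Unset Strict Implicit. Unset Printing Implicit Defensive.
Local Open Scope ring_scope.
Local Open Scope order_scope.

Section LinearFunctions.
Variables (R : comPzRingType) (U V : lmodType R) (f : U -> V).
Hypothesis f_lin : linear f.

Lemma lin0 : f 0 = 0.
Proof.
have H := f_lin 1 0 0; rewrite !scale1r addr0 in H.
by apply: (addrI (f 0)); rewrite addr0 -H.
Qed.

Lemma linD x y : f (x + y) = f x + f y.
Proof. by have := f_lin 1 x y; rewrite !scale1r. Qed.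

Lemma linN x : f (- x) = - f x.
Proof. by have := f_lin (-1) x 0; rewrite !addr0 lin0 addr0 !scaleN1r. Qed.

Lemma linB x y : f (x - y) = f x - f y.
Proof. by rewrite linD linN. Qed.

Lemma lin_sum (I : Type) (r : seq I) (P : pred I) (g : I -> U) :
  f (\sum_(i <- r | P i) g i) = \sum_(i <- r | P i) f (g i).
Proof. exact: (big_morph f linD lin0). Qed.
End LinearFunctions.

Lemma lin_comp (R : comPzRingType) (U V W : lmodType R) (f : U -> V) (g : V -> W) :
  linear f -> linear g -> linear (fun x => g (f x)).
Proof. by move=> f_lin g_lin k x y; rewrite f_lin g_lin. Qed.

Lemma sum_delta (V : zmodType) (T : eqType) (r : seq T) (P : pred T) (c : T)
    (f : T -> V) :
  uniq r ->
  \sum_(x <- r | P x) (if x == c then f x else 0) =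
  if (c \in r) && P c then f c else 0.
Proof.
move=> r_uniq; rewrite -big_filter.
case: ifP => [/andP[c_r Pc] | c_notin].
  rewrite (bigD1_seq c) ?mem_filter ?Pc ?filter_uniq //= eqxx.
  by rewrite big1 ?addr0 // => x /negbTE ->.
rewrite big1_seq // => x /andP[_]; rewrite mem_filter => /andP[Px x_r].
by case: eqP => // x_c; move: c_notin; rewrite -x_c x_r Px.
Qed.

Lemma dsum_sumE (R : comPzRingType) (I : finType) (M : I -> lmodType R)
    (J : Type) (r : seq J) (P : pred J) (f : J -> dsum M) (i : I) :
  (\sum_(j <- r | P j) f j) i = \sum_(j <- r | P j) f j i.
Proof. by apply: (big_morph (fun g : dsum M => g i)) => [g h|]; rewrite ffunE. Qed.

(* The submodule of fixed points of a linear endomorphism e (its image, when e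
   is idempotent).  The predicate mentions the linearity proof so that the
   closure instance below is found by unification. *)
Section FixedSubmodule.
Variables (R : comPzRingType) (M : lmodType R) (e : M -> M).

Definition fixed_points (e_lin : linear e) : {pred M} := [pred x | e x == x].

Variable e_lin : linear e.

Fact fixed_points_submod_closed : GRing.submod_closed (fixed_points e_lin).
Proof.
split=> [|k x y]; rewrite !inE ?(lin0 e_lin) // => /eqP ex /eqP ey.
by rewrite e_lin ex ey.
Qed.

HB.instance Definition _ :=
  GRing.isSubmodClosed.Build R M (fixed_points e_lin) fixed_points_submod_closed.

Definition fixed_submod := {x : M | x \in fixed_points e_lin}.
HB.instance Definition _ := Choice.on fixed_submod.
HB.instance Definition _ := SubType.on fixed_submod.
HB.instance Definition _ := [SubChoice_isSubLmodule of fixed_submod by <:].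
End FixedSubmodule.

Section SplitFunctorLaws.
Variables (R : comPzRingType) (d : Order.disp_t) (A : porderType d)
          (X : split_functor R A).
Hypothesis HX : is_split X.
Local Notation G := (sf_G X).
Local Notation F := (sf_F X).
Local Notation pi al := (@sf_pi _ _ _ X al).

Lemma G_linear b a : b <= a -> linear (G b a).
Proof. by case: HX => G_lin _ _ _ _; apply: G_lin. Qed.

Lemma F_linear b a : b <= a -> linear (F a b).
Proof. by case: HX => _ F_lin _ _ _; apply: F_lin. Qed.

Lemma G_id a x : G a a x = x.
Proof. by case: HX => _ _ [G1 _] _ _; apply: G1. Qed.

Lemma G_comp c b a : c <= b -> b <= a -> forall x, G c a x = G b a (G c b x).
Proof. by case: HX => _ _ [_ GM] _ _; apply: GM. Qed.

Lemma F_id a x : F a a x = x.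
Proof. by case: HX => _ _ _ [F1 _] _; apply: F1. Qed.

Lemma F_comp a b c : c <= b -> b <= a -> forall x, F a c x = F b c (F a b x).
Proof. by case: HX => _ _ _ [_ FM] _; apply: FM. Qed.

Lemma FG_id b a : b <= a -> forall x, F a b (G b a x) = x.
Proof. by case: HX => _ _ _ _ FG; apply: FG. Qed.

Lemma pi_linear al a : a <= al -> linear (pi al a).
Proof. by move=> le_a_al; apply: lin_comp; [apply: F_linear | apply: G_linear]. Qed.

Lemma pi_G a b x : b <= a -> pi a b (G b a x) = G b a x.
Proof. by move=> le_ba; rewrite /sf_pi FG_id. Qed.

Lemma F_pi a b y : b <= a -> F a b (pi a b y) = F a b y.
Proof. by move=> le_ba; rewrite /sf_pi FG_id. Qed.
End SplitFunctorLaws.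

Lemma core_GF (R : comPzRingType) (d : Order.disp_t) (A : porderType d)
    (Z : split_functor R A) : is_core_split Z ->
  forall b a, b <= a -> forall z, sf_G Z b a (sf_F Z a b z) = z.
Proof.
move=> [Z_split G_bij] b a le_ba z; have [g GK KG] := G_bij b a le_ba.
by rewrite -(KG z) (FG_id Z_split le_ba).
Qed.

Section LocallyFinitePoset.
Variables (d : Order.disp_t) (A : porderType d) (hat : A -> seq A).
Hypothesis hat_uniq : forall a : A, uniq (hat a).
Hypothesis hat_spec : forall a b : A, (b \in hat a) = (b <= a).

Lemma size_hat_lt b a : b < a -> (size (hat b) < size (hat a))%N.
Proof.
move=> lt_ba; have ab_uniq : uniq (a :: hat b).
  by rewrite /= hat_uniq andbT hat_spec (lt_geF lt_ba).
apply: uniq_leq_size ab_uniq _ => y; rewrite inE !hat_spec.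
by case/orP=> [/eqP -> // | le_yb]; apply: le_trans le_yb (ltW lt_ba).
Qed.

Lemma mem_hat_val a (c : seq_sub (hat a)) : ssval c <= a.
Proof. by rewrite -hat_spec ssvalP. Qed.

(* Well-founded induction along < (down-sets are finite). *)
Lemma hat_ind (P : A -> Prop) :
  (forall a, (forall b, b < a -> P b) -> P a) -> forall a, P a.
Proof.
move=> IH a; move: {2}(size (hat a)).+1 (ltnSn (size (hat a))) => n.
elim: n a => [//|n IHn] a size_a; apply: IH => b lt_ba; apply: IHn.
by apply: leq_trans (size_hat_lt lt_ba) _; rewrite -ltnS.
Qed.

Lemma sum_hat_le (V : zmodType) al a (P : pred A) (f : A -> V) : a <= al ->
  \sum_(b <- hat al | (b <= a) && P b) f b = \sum_(b <- hat a | P b) f b.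
Proof.
move=> le_a_al; rewrite -big_filter -[RHS]big_filter; apply: perm_big.
apply: uniq_perm; rewrite ?filter_uniq // => b; rewrite !mem_filter !hat_spec.
case: (P b); rewrite ?andbF ?andbT //.
by apply/andP/idP => [[] // | le_ba]; split=> //; apply: le_trans le_a_al.
Qed.

Lemma sum_hat_below (V : zmodType) al a (f : A -> V) : a <= al ->
  \sum_(b <- hat al | b <= a) f b = \sum_(b <- hat a) f b.
Proof.
move=> le_a_al; rewrite -(@sum_hat_le V al a predT f le_a_al).
by apply: eq_bigl => b; rewrite andbT.
Qed.

Lemma sum_hat_top (V : zmodType) a (P : pred A) (f : A -> V) :
  \sum_(b <- hat a | P b) f b =
  (if P a then f a else 0) + \sum_(b <- hat a | (b < a) && P b) f b.
Proof.
rewrite big_mkcond (bigD1_seq a) ?hat_spec //=; congr (_ + _).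
rewrite big_mkcondr /= big_seq_cond [RHS]big_seq_cond; apply: eq_bigl => b.
by rewrite hat_spec lt_neqAle; case: (b <= a); rewrite ?andbF ?andbT.
Qed.

Lemma sum_hat_top_all (V : zmodType) a (f : A -> V) :
  \sum_(b <- hat a) f b = f a + \sum_(b <- hat a | b < a) f b.
Proof. by rewrite (sum_hat_top a predT); under eq_bigl do rewrite andbT. Qed.

Section Moebius.
Variables (V : zmodType) (f : A -> V).

Fixpoint moebius_iter (n : nat) (a : A) : V :=
  if n is n'.+1 then f a - \sum_(b <- hat a | b < a) moebius_iter n' b else 0.

Definition moebius (a : A) : V := moebius_iter (size (hat a)).+1 a.

Lemma moebius_iter_stable n m a :
  (size (hat a) < n)%N -> (size (hat a) < m)%N -> moebius_iter n a = moebius_iter m a.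
Proof.
elim: n m a => [//|n IH] [//|m] a lt_n lt_m /=; congr (_ - _).
rewrite big_seq_cond [RHS]big_seq_cond; apply: eq_bigr => b /andP[_ lt_ba].
by apply: IH; apply: leq_trans (size_hat_lt lt_ba) _; rewrite -ltnS.
Qed.

Lemma moebiusE a : moebius a = f a - \sum_(b <- hat a | b < a) moebius b.
Proof.
rewrite {1}/moebius /=; congr (_ - _); apply: eq_bigr => b lt_ba.
by apply: moebius_iter_stable => //; apply: size_hat_lt.
Qed.

Lemma moebius_sum a : \sum_(b <- hat a) moebius b = f a.
Proof. by rewrite sum_hat_top_all moebiusE subrK. Qed.

Lemma moebius_unique (t : A -> V) c :
  (forall b, b <= c -> f b = \sum_(b' <- hat b) t b') ->
  forall b, b <= c -> t b = moebius b.
Proof.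
move=> f_sum; elim/hat_ind => b IH le_bc.
have below_eq : \sum_(b' <- hat b | b' < b) t b' = \sum_(b' <- hat b | b' < b) moebius b'.
  rewrite big_seq_cond [RHS]big_seq_cond; apply: eq_bigr => b' /andP[_ lt_b'b].
  by apply: IH; last apply: le_trans (ltW lt_b'b) le_bc.
by rewrite moebiusE f_sum // sum_hat_top_all below_eq addrK.
Qed.
End Moebius.

Section MoebiusEndomorphisms.
Variables (R : comPzRingType) (X : split_functor R A).
Local Notation pi al := (@sf_pi _ _ _ X al).

Definition sf_s (al c : A) (x : sf_obj X al) : sf_obj X al :=
  moebius (fun a => pi al a x) c.
Local Notation s al := (@sf_s al).

Lemma sf_sE al c x : s al c x = pi al c x - \sum_(b <- hat c | b < c) s al b x.
Proof. exact: moebiusE. Qed.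

Lemma sf_s_sum al a x : a <= al ->
  pi al a x = \sum_(b <- hat al | b <= a) s al b x.
Proof. by move=> le_a_al; rewrite sum_hat_below // moebius_sum. Qed.

Lemma sf_s_unique al c (t : A -> sf_obj X al -> sf_obj X al) x : c <= al ->
  (forall b, b <= c -> pi al b x = \sum_(b' <- hat al | b' <= b) t b' x) ->
  forall b, b <= c -> t b x = s al b x.
Proof.
move=> le_c_al t_sum; apply: (moebius_unique (c := c)) => b le_bc.
by rewrite t_sum ?sum_hat_below // (le_trans le_bc).
Qed.

Hypothesis HX : is_split X.
Local Notation G := (sf_G X).
Local Notation F := (sf_F X).

Lemma sf_s_linear al c : c <= al -> linear (s al c).
Proof.
move=> le_c_al k u v; symmetry.
apply: (sf_s_unique (c := c) (t := fun b y => k *: s al b u + s al b v)) => // b le_bc.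
rewrite big_split /= -scaler_sumr -!sf_s_sum ?(le_trans le_bc) //.
by rewrite (pi_linear HX (le_trans le_bc le_c_al)).
Qed.

Lemma sf_s_transfer a c b x : c <= a -> b <= c ->
  s a b x = G c a (s c b (F a c x)).
Proof.
move=> le_ca le_bc; symmetry.
apply: (sf_s_unique (c := c) (t := fun b y => G c a (s c b (F a c y)))) => // b' le_b'c.
have le_b'a := le_trans le_b'c le_ca.
rewrite -(lin_sum (G_linear HX le_ca)) sum_hat_below // -(sum_hat_below _ le_b'c).
by rewrite -sf_s_sum // /sf_pi (G_comp HX le_b'c le_ca) (F_comp HX le_b'c le_ca).
Qed.
End MoebiusEndomorphisms.

Section DirectSumModel.
Variables (R : comPzRingType) (fam : A -> split_functor R A).
Local Notation Y := (ST_functor hat fam).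

Lemma dget_in a (v : sf_obj Y a) b (b_in : b \in hat a) : dget v b = v (SeqSub b_in).
Proof.
rewrite /dget; move: (erefl (b \in hat a)).
case: {2 3}(b \in hat a) => e; last by move: (e); rewrite b_in.
by rewrite (bool_irrelevance e b_in).
Qed.

Lemma dget_val a (v : sf_obj Y a) (c : seq_sub (hat a)) : dget v (ssval c) = v c.
Proof. by case: c => c c_in; apply: dget_in. Qed.

Definition dproj al (Q : pred A) (v : sf_obj Y al) : sf_obj Y al :=
  [ffun c => if Q (ssval c) then v c else 0].

Lemma dproj_comp al (Q Q' : pred A) (v : sf_obj Y al) :
  dproj Q (dproj Q' v) = dproj (fun c => Q c && Q' c) v.
Proof. by apply/ffunP => c; rewrite !ffunE; case: (Q _); case: (Q' _). Qed.

Lemma dproj_sum al (Q : pred A) (v : sf_obj Y al) :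
  \sum_(c <- hat al | Q c) dproj (pred1 c) v = dproj Q v.
Proof.
apply/ffunP => c; rewrite dsum_sumE ffunE.
under eq_bigr do rewrite ffunE /= eq_sym.
by rewrite (sum_delta Q (ssval c) (fun=> v c)) // ssvalP.
Qed.

Hypothesis fam_core : forall c, is_core_split (fam c).

Lemma ST_pi al a (v : sf_obj Y al) : a <= al ->
  @sf_pi _ _ _ Y al a v = dproj (fun c => c <= a) v.
Proof.
move=> le_a_al; apply/ffunP => c; rewrite /sf_pi /= /S_map !ffunE.
case: ifP => // le_ca; have c_in : ssval c \in hat a by rewrite hat_spec.
by rewrite (dget_in _ c_in) ffunE dget_val core_GF.
Qed.
End DirectSumModel.

Section DecomposableIntersection.
Variables (R : comPzRingType) (X : split_functor R A) (fam : A -> split_functor R A).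
Hypothesis fam_core : forall c, is_core_split (fam c).
Local Notation Y := (ST_functor hat fam).
Variables (phi : forall a, sf_obj X a -> sf_obj Y a)
          (psi : forall a, sf_obj Y a -> sf_obj X a).
Hypothesis psi_lin : forall a, linear (@psi a).
Hypothesis phi_nat :
  forall b a, b <= a -> forall x, phi (sf_G X b a x) = sf_G Y b a (phi x).
Hypothesis psi_nat :
  forall b a, b <= a -> forall y, psi (sf_F Y a b y) = sf_F X a b (psi y).
Hypotheses (phiK : forall a, cancel (@phi a) (@psi a))
           (psiK : forall a, cancel (@psi a) (@phi a)).

Lemma iso_pi al a x : a <= al ->
  @sf_pi _ _ _ X al a x = psi (dproj (fun c => c <= a) (phi x)).
Proof.
move=> le_a_al; rewrite -ST_pi // -[LHS]phiK /sf_pi phi_nat //.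
by rewrite -{1}(phiK x) -psi_nat // psiK.
Qed.

Lemma iso_s al c x : c <= al ->
  @sf_s _ X al c x = psi (dproj (pred1 c) (phi x)).
Proof.
move=> le_c_al; symmetry.
apply: (sf_s_unique (c := al) (t := fun c y => psi (dproj (pred1 c) (phi y))))
  => // b le_b_al.
by rewrite -(lin_sum (@psi_lin al)) dproj_sum iso_pi.
Qed.

Lemma iso_intersection_property : intersection_property hat X.
Proof.
move=> al s s_lin s_sum a b le_a_al le_b_al x.
have s_eq c : c <= al -> s c x = psi (dproj (pred1 c) (phi x)).
  move=> le_c_al; rewrite -iso_s //.
  by apply: (sf_s_unique (c := al) (t := s)) => // b' le_b'al; apply: s_sum.
have -> : \sum_(c <- hat al | (c <= a) && (c <= b)) s c x =
          \sum_(c <- hat al | (c <= a) && (c <= b)) psi (dproj (pred1 c) (phi x)).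
  rewrite big_seq_cond [RHS]big_seq_cond; apply: eq_bigr => c /andP[].
  by rewrite hat_spec => /s_eq.
by rewrite -(lin_sum (@psi_lin al)) dproj_sum !iso_pi // psiK dproj_comp.
Qed.
End DecomposableIntersection.

Section IntersectionDecomposable.
Variables (R : comPzRingType) (X : split_functor R A).
Hypotheses (HX : is_split X) (HIP : intersection_property hat X).
Local Notation G := (sf_G X).
Local Notation F := (sf_F X).
Local Notation pi al := (@sf_pi _ _ _ X al).
Local Notation s al := (@sf_s _ X al).

Lemma pi_pi al a b x : a <= al -> b <= al ->
  pi al a (pi al b x) = \sum_(c <- hat b | c <= a) s al c x.
Proof.
move=> le_a_al le_b_al; rewrite -(@sum_hat_le _ al b (fun c => c <= a)) //.
under eq_bigl do rewrite andbC.
apply: HIP => // [c le_c_al | c le_c_al y]; first exact: sf_s_linear.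
exact: sf_s_sum.
Qed.

Lemma pi_s al a b x : a <= al -> b <= al ->
  pi al a (s al b x) = if b <= a then s al b x else 0.
Proof.
move=> le_a_al; elim/hat_ind: b => b IH le_b_al.
have pi_lin := pi_linear HX le_a_al.
have below_eq : \sum_(c <- hat b | c < b) pi al a (s al c x) =
                \sum_(c <- hat b | (c < b) && (c <= a)) s al c x.
  rewrite [RHS]big_mkcondr big_seq_cond [RHS]big_seq_cond.
  apply: eq_bigr => c /andP[_ lt_cb]; apply: IH => //.
  exact: le_trans (ltW lt_cb) le_b_al.
rewrite [in LHS]sf_sE (linB pi_lin) (lin_sum pi_lin) pi_pi // below_eq.
by rewrite sum_hat_top addrK.
Qed.

Lemma s_s al a b x : a <= al -> b <= al ->
  s al a (s al b x) = if a == b then s al b x else 0.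
Proof.
move=> + le_b_al; elim/hat_ind: a => a IH le_a_al.
have below_eq : \sum_(c <- hat a | c < a) s al c (s al b x) =
                \sum_(c <- hat a | c < a) (if c == b then s al b x else 0).
  rewrite big_seq_cond [RHS]big_seq_cond.
  apply: eq_bigr => c /andP[_ lt_ca]; apply: IH => //.
  exact: le_trans (ltW lt_ca) le_a_al.
rewrite sf_sE pi_s // below_eq sum_delta // hat_spec.
case: (a =P b) => [-> | /eqP ne_ab]; first by rewrite lexx ltxx andbF subr0.
by rewrite lt_neqAle eq_sym ne_ab andbb; case: ifP; rewrite ?subrr ?subr0.
Qed.

Lemma s_pi al c b x : c <= al -> b <= al ->
  s al c (pi al b x) = if c <= b then s al c x else 0.
Proof.
move=> le_c_al le_b_al; rewrite (sf_s_sum x le_b_al) (lin_sum (sf_s_linear HX le_c_al)).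
rewrite big_seq_cond (eq_bigr (fun b' => if b' == c then s al b' x else 0)).
  by rewrite -big_seq_cond sum_delta // hat_spec le_c_al.
by move=> b' /andP[]; rewrite hat_spec => le_b'al _; rewrite s_s // eq_sym.
Qed.

Lemma s_F a c x : c <= a -> s c c (F a c x) = F a c (s a c x).
Proof. by move=> le_ca; rewrite (sf_s_transfer HX x le_ca) // (FG_id HX le_ca). Qed.

Lemma G_fixed a c y : c <= a -> s c c y = y -> s a c (G c a y) = G c a y.
Proof.
by move=> le_ca y_fixed; rewrite (sf_s_transfer HX _ le_ca) // (FG_id HX le_ca) y_fixed.
Qed.

Lemma FG_fixed a b c (y : sf_obj X c) : b <= a -> c <= a -> s c c y = y ->
  F a b (G c a y) = if c <= b then G c b y else 0.
Proof.
move=> le_ba le_ca y_fixed; case: ifP => le_cb.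
  by rewrite (G_comp HX le_cb le_ba) (FG_id HX le_ba).
rewrite -(G_fixed le_ca y_fixed) -(F_pi HX _ le_ba) pi_s // le_cb.
exact: (lin0 (F_linear HX le_ba)).
Qed.

Definition component (c : A) : lmodType R := fixed_submod (sf_s_linear HX (lexx c)).

Definition component_functor (c : A) : split_functor R A :=
  SplitFunctor (fun=> component c) (fun _ _ => id) (fun _ _ => id).

Lemma component_core c : is_core_split (component_functor c).
Proof. by split; [split=> // | move=> b a _; exists id]. Qed.

Lemma component_fixed c (p : component c) : s c c (val p) = val p.
Proof. exact: (eqP (valP p)). Qed.

Fact to_component_subproof c (y : sf_obj X c) :
  s c c y \in fixed_points (sf_s_linear HX (lexx c)).
Proof. by rewrite inE s_s // eqxx. Qed.

Definition to_component c (y : sf_obj X c) : component c :=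
  exist _ (s c c y) (to_component_subproof y).

Local Notation Y := (ST_functor hat component_functor).

Definition iso_to a (x : sf_obj X a) : sf_obj Y a :=
  [ffun c => to_component (F a (ssval c) x)].

Definition iso_from a (v : sf_obj Y a) : sf_obj X a :=
  \sum_(c <- hat a) G c a (val (dget v c)).

Lemma iso_to_linear a : linear (@iso_to a).
Proof.
move=> k u v; apply/ffunP => c; apply: val_inj; rewrite !ffunE /=.
by rewrite (F_linear HX (mem_hat_val c)) (sf_s_linear HX (lexx _)).
Qed.

Lemma iso_from_linear a : linear (@iso_from a).
Proof.
move=> k u v; rewrite /iso_from scaler_sumr -big_split /=.
rewrite big_seq [RHS]big_seq; apply: eq_bigr => c c_in.
by rewrite !(dget_in _ c_in) !ffunE /= (G_linear HX (_ : c <= a)) // -hat_spec.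
Qed.

(* For c not below b, s^c_c F^a_c G^b_a = F^a_c s^a_c pi^a_b G^b_a = 0. *)
Lemma iso_to_natural b a x : b <= a ->
  iso_to (G b a x) = sf_G Y b a (iso_to x).
Proof.
move=> le_ba; apply/ffunP => c; rewrite /= /S_map !ffunE.
have le_ca := mem_hat_val c; apply: val_inj => /=; case: ifP => le_cb /=.
  have c_in : ssval c \in hat b by rewrite hat_spec.
  by rewrite (dget_in _ c_in) ffunE /= (F_comp HX le_cb le_ba) (FG_id HX le_ba).
by rewrite (s_F _ le_ca) -(pi_G HX _ le_ba) s_pi // le_cb (lin0 (F_linear HX le_ca)).
Qed.

(* F^a_b G^c_a vanishes on the summands with c not below b (by FG_fixed). *)
Lemma iso_from_natural b a v : b <= a ->
  iso_from (sf_F Y a b v) = F a b (iso_from v).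
Proof.
move=> le_ba; rewrite /iso_from (lin_sum (F_linear HX le_ba)) /=.
transitivity (\sum_(c <- hat a | c <= b) G c b (val (dget v c))).
  rewrite (@sum_hat_below _ a b _ le_ba) big_seq [RHS]big_seq.
  apply: eq_bigr => c c_in.
  have c_in_a : c \in hat a by rewrite hat_spec (le_trans _ le_ba) // -hat_spec.
  by rewrite (dget_in _ c_in) ffunE (dget_in _ c_in_a).
rewrite big_mkcond big_seq [RHS]big_seq; apply: eq_bigr => c c_in.
by rewrite FG_fixed // ?component_fixed // -hat_spec.
Qed.

(* x = sum_c s^a_c x = sum_c G^c_a s^c_c F^a_c x *)
Lemma iso_toK a : cancel (@iso_to a) (@iso_from a).
Proof.
move=> x; rewrite /iso_from big_seq (eq_bigr (fun c => s a c x)); last first.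
  move=> c c_in; have le_ca : c <= a by rewrite -hat_spec.
  by rewrite (dget_in _ c_in) ffunE /= (sf_s_transfer HX x le_ca (lexx c)).
rewrite -big_seq -(@sum_hat_below _ a a _ (lexx a)) -sf_s_sum //.
by rewrite /sf_pi (F_id HX) (G_id HX).
Qed.

(* s^c_c F^a_c kills the summands c' <> c and restores the c-th one. *)
Lemma iso_fromK a : cancel (@iso_from a) (@iso_to a).
Proof.
move=> v; apply/ffunP => c; apply: val_inj; rewrite ffunE /=.
have le_ca := mem_hat_val c.
rewrite (s_F _ le_ca) /iso_from (lin_sum (sf_s_linear HX le_ca)) big_seq.
rewrite (eq_bigr (fun c' => if c' == ssval c then G c' a (val (dget v c')) else 0)).
  by rewrite -big_seq (sum_delta predT) // ssvalP /= (FG_id HX le_ca) dget_val.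
move=> c' c'_in; have le_c'a : c' <= a by rewrite -hat_spec.
rewrite -(G_fixed le_c'a (component_fixed _)) s_s // eq_sym.
by case: eqP => // ->; rewrite (G_fixed le_ca (component_fixed _)).
Qed.

Lemma intersection_decomposable : decomposable hat X.
Proof.
exists component_functor; split; first exact: component_core.
exists iso_to, iso_from; split.
- exact: iso_to_linear.
- exact: iso_from_linear.
- by move=> b a le_ba x; apply: iso_to_natural.
- by move=> b a le_ba v; apply: iso_from_natural.
- by move=> a; split; [apply: iso_toK | apply: iso_fromK].
Qed.
End IntersectionDecomposable.
End LocallyFinitePoset.

Theorem theorem4 (R : comPzRingType) (d : Order.disp_t) (A : porderType d)
    (hat : A -> seq A)
    (hat_uniq : forall a : A, uniq (hat a))
    (hat_spec : forall a b : A, (b \in hat a) = (b <= a))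
    (X : split_functor R A) (HX : is_split X) :
  intersection_property hat X <-> decomposable hat X.
Proof.
split=> [HIP | [fam [fam_core [phi [psi [_ psi_lin phi_nat psi_nat iso_inv]]]]]].
  exact: intersection_decomposable.
by apply: (iso_intersection_property hat_uniq hat_spec fam_core psi_lin phi_nat psi_nat)
  => a; case: (iso_inv a).
Qed.
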